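(* Let $w_0\in\mathbb{N}$ and $w=(w_1,\dots,w_n)$ with each $w_i$ a positive integer at most $2^{n^2}$, let $M=cn$ for a sufficiently large absolute constant $c>0$, let $\lambda=M\|w\|_2$, and define $p_W(x)=\left(\sum_{i=1}^n w_ix_i-w_0\right)^2+\lambda\sum_{i=1}^n x_i(1-x_i)$ and $f_W(x)=\mathrm{sign}(\tfrac12-p_W(x))$. Let $x\in[0,1]^n$ be at $\ell_1$ distance at most $1/(4\|w\|_2)$ from some $z\in\{0,1\}^n$. If $w\cdot z\neq w_0$, then $f_W(x)=-1$.
   Context: $\mathrm{sign}(0)=1$; $\|w\|_2$ is the Euclidean norm. *)

From HB Require Import structures.
From mathcomp Require Import all_boot all_order all_algebra.
From mathcomp Require Import reals.
Set Implicit Arguments. Unset Strict Implicit. Unset Printing Implicit Defensive.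
Import Order.TTheory GRing.Theory Num.Theory.
Local Open Scope ring_scope.

Definition sgn (R : realDomainType) (t : R) : R := if 0 <= t then 1 else -1.

Definition norm2 (R : rcfType) (n : nat) (v : 'I_n -> R) : R :=
  Num.sqrt (\sum_(i < n) v i ^+ 2).

Definition pW (R : ringType) (n : nat) (w0 : R) (w : 'I_n -> R) (lam : R)
  (x : 'I_n -> R) : R :=
  (\sum_(i < n) w i * x i - w0) ^+ 2 + lam * \sum_(i < n) x i * (1 - x i).

Definition fW (R : realFieldType) (n : nat) (w0 : R) (w : 'I_n -> R) (lam : R)
  (x : 'I_n -> R) : R :=
  sgn (2^-1 - pW w0 w lam x).

From HB Require Import structures.
From mathcomp Require Import all_boot all_order all_algebra.
From mathcomp Require Import reals.
From mathcomp Require Import ring lra.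
Set Implicit Arguments. Unset Strict Implicit. Unset Printing Implicit Defensive.
Import Order.TTheory GRing.Theory Num.Theory.
Local Open Scope ring_scope.

(** Write [w . x - w0 = k + d] with [k = w . z - w0] and [d = w . (x - z)].
    Since [k] is a nonzero integer, [|k| >= 1]; since every [|w_i| <= |w|_2],
    [|w . y| <= |w|_2 |y|_1], which gives [|d| <= 1/4].  Hence
    [(w . x - w0)^2 >= 9/16 > 1/2], while the penalty term
    [lam * sum_i x_i (1 - x_i)] is nonnegative on [[0,1]^n], so
    [p_W(x) > 1/2].  Neither the bound [w_i <= 2^(n^2)] nor the size of
    [c] matters beyond [c >= 0]. *)

Section Norm2.
Variables (R : rcfType) (n : nat).
Implicit Types v y : 'I_n -> R.

Lemma norm2_ge0 v : 0 <= norm2 v.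
Proof. exact: sqrtr_ge0. Qed.

Lemma norm_le_norm2 v i : `|v i| <= norm2 v.
Proof.
rewrite /norm2 -sqrtr_sqr ler_sqrt; last by apply: sumr_ge0 => j _; apply: sqr_ge0.
by rewrite (bigD1 i) //= lerDl sumr_ge0 // => j _; apply: sqr_ge0.
Qed.

Lemma norm_dot_le_norm2_l1 v y :
  `|\sum_(i < n) v i * y i| <= norm2 v * \sum_(i < n) `|y i|.
Proof.
rewrite mulr_sumr; apply: le_trans (ler_norm_sum _ _ _) _.
apply: ler_sum => i _; rewrite normrM.
by rewrite ler_wpM2r // norm_le_norm2.
Qed.

Lemma norm_dot_le_quarter v y :
  \sum_(i < n) `|y i| <= (4 * norm2 v)^-1 ->
  `|\sum_(i < n) v i * y i| <= 4^-1.
Proof.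
move=> hy; apply: le_trans (norm_dot_le_norm2_l1 v y) _.
apply: le_trans (ler_wpM2l (norm2_ge0 v) hy) _.
have [->|v_neq0] := eqVneq (norm2 v) 0; first by rewrite mul0r invr_ge0; lra.
by rewrite invfM mulrCA divff // mulr1.
Qed.

End Norm2.

Lemma half_lt_sqr_shift (R : realFieldType) (k d : R) :
  1 <= `|k| -> `|d| <= 4^-1 -> 2^-1 < (k + d) ^+ 2.
Proof.
move=> hk hd; rewrite -real_normK ?num_real //.
have hkd : 3 / 4 <= `|k + d| by have := lerB_dist k (- d); rewrite opprK normrN; lra.
have := normr_ge0 (k + d); nra.
Qed.

Lemma sqr_dot_sub_le_pW (R : realDomainType) n (w0 lam : R) (w x : 'I_n -> R) :
  0 <= lam -> (forall i, 0 <= x i <= 1) ->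
  (\sum_(i < n) w i * x i - w0) ^+ 2 <= pW w0 w lam x.
Proof.
move=> lam_ge0 hx; rewrite /pW lerDl mulr_ge0 // sumr_ge0 // => i _.
by have /andP [x_ge0 x_le1] := hx i; rewrite mulr_ge0 // subr_ge0.
Qed.

Lemma fW_neg (R : realFieldType) n (w0 lam : R) (w x : 'I_n -> R) :
  2^-1 < pW w0 w lam x -> fW w0 w lam x = -1.
Proof. by rewrite /fW /sgn subr_ge0 => /lt_geF ->. Qed.

Lemma norm_natr_sub_ge1 (R : archiNumDomainType) (a b : nat) :
  a <> b -> 1 <= `|a%:R - b%:R : R|.
Proof.
move=> a_neq_b; apply: norm_intr_ge1; first by rewrite rpredB ?natr_int.
by rewrite subr_eq0 eqr_nat; apply/eqP.
Qed.

Theorem claim5p9 (R : realType) :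
  exists c0 : R, 0 < c0 /\
  forall c : R, c0 <= c ->
  forall (n : nat) (w0 : nat) (w : 'I_n -> nat) (x : 'I_n -> R) (z : 'I_n -> bool),
    (forall i, (0 < w i <= 2 ^ (n ^ 2))%N) ->
    (forall i, 0 <= x i <= 1) ->
    let wR := fun i => (w i)%:R : R in
    let M := c * n%:R in
    let lam := M * norm2 wR in
    \sum_(i < n) `|x i - (z i)%:R| <= (4 * norm2 wR)^-1 ->
    (\sum_(i < n) w i * z i)%N <> w0 ->
    fW (w0%:R) wR lam x = -1.
Proof.
exists 1; split => // c c_ge1 n w0 w x z _ hx wR M lam hd wz_neq_w0.
set k : R := (\sum_(i < n) w i * z i)%N%:R - w0%:R.
set d := \sum_(i < n) wR i * (x i - (z i)%:R).
have split_dot : \sum_(i < n) wR i * x i - w0%:R = k + d.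
  rewrite /k /d natr_sum addrAC -big_split /=; congr (_ - _).
  by apply: eq_bigr => i _; rewrite natrM; ring.
have lam_ge0 : 0 <= lam by rewrite !mulr_ge0 ?norm2_ge0 //; lra.
apply: fW_neg; apply: (lt_le_trans _ (sqr_dot_sub_le_pW w0%:R wR lam_ge0 hx)).
rewrite split_dot; apply: half_lt_sqr_shift; first exact: norm_natr_sub_ge1.
exact: norm_dot_le_quarter.
Qed.
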